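(* Let $A\in\mathbb{R}^{m\times n}$ be semi-monotone (i.e. $A^{\dagger}\geq 0$). Let $A=B-C$ be a proper weak regular splitting and $A=U-V$ a proper regular splitting of $A$. If $B^{\dagger}\geq U^{\dagger}$ and all row sums of $U^{\dagger}$ are positive, then $$\rho(B^{\dagger}C)\leq \rho(U^{\dagger}V)<1.$$
   Context: All matrices are real. $X^{\dagger}$ denotes the Moore–Penrose inverse of $X$, and $\rho(\cdot)$ the spectral radius. For a matrix $X$, $X\geq 0$ means that all entries of $X$ are nonnegative and at least one entry is positive; $X\geq Y$ means $X-Y\geq 0$. $R(X)$ and $N(X)$ denote range and null space. A splitting $A=U-V$ is proper if $R(U)=R(A)$ and $N(U)=N(A)$. It is a proper regular splitting if it is proper, $U^{\dagger}\geq 0$ and $V\geq 0$; it is a proper weak regular splitting if it is proper, $U^{\dagger}\geq 0$ and $U^{\dagger}V\geq 0$. *)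

From HB Require Import structures.
From mathcomp Require Import all_boot all_order all_algebra.
From mathcomp Require Import complex.
From mathcomp Require Import reals.
From Stdlib Require Import ClassicalEpsilon.
Set Implicit Arguments. Unset Strict Implicit. Unset Printing Implicit Defensive.
Import Order.TTheory GRing.Theory Num.Theory.
Local Open Scope ring_scope.

Definition is_MP_inverse (R : realType) (m n : nat)
    (A : 'M[R]_(m, n)) (X : 'M[R]_(n, m)) : Prop :=
  [/\ A *m X *m A = A, X *m A *m X = X,
      (A *m X)^T = A *m X & (X *m A)^T = X *m A].

(* The Moore-Penrose inverse A^dagger (it exists and is unique for real
   matrices; chosen by classical choice). *)
Definition mpinv (R : realType) (m n : nat) (A : 'M[R]_(m, n)) : 'M[R]_(n, m) :=
  epsilon (inhabits 0) (is_MP_inverse A).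

Definition mx_nonneg (R : realType) (m n : nat) (X : 'M[R]_(m, n)) : Prop :=
  (forall i j, 0 <= X i j) /\ (exists i j, 0 < X i j).

Definition mx_ge (R : realType) (m n : nat) (X Y : 'M[R]_(m, n)) : Prop :=
  mx_nonneg (X - Y).

Definition range_mx (R : realType) (m n : nat) (X : 'M[R]_(m, n))
    (y : 'cV[R]_m) : Prop := exists x : 'cV[R]_n, y = X *m x.
Definition null_mx (R : realType) (m n : nat) (X : 'M[R]_(m, n))
    (x : 'cV[R]_n) : Prop := X *m x = 0.

Definition proper_splitting (R : realType) (m n : nat)
    (A U V : 'M[R]_(m, n)) : Prop :=
  [/\ A = U - V,
      (forall y, range_mx U y <-> range_mx A y) &
      (forall x, null_mx U x <-> null_mx A x)].

Definition proper_regular_splitting (R : realType) (m n : nat)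
    (A U V : 'M[R]_(m, n)) : Prop :=
  [/\ proper_splitting A U V, mx_nonneg (mpinv U) & mx_nonneg V].

Definition proper_weak_regular_splitting (R : realType) (m n : nat)
    (A U V : 'M[R]_(m, n)) : Prop :=
  [/\ proper_splitting A U V, mx_nonneg (mpinv U) & mx_nonneg (mpinv U *m V)].

Definition semi_monotone (R : realType) (m n : nat) (A : 'M[R]_(m, n)) : Prop :=
  mx_nonneg (mpinv A).

(* Complex eigenvalues (with multiplicity) of a real square matrix: the roots
   in R[i] of its characteristic polynomial. *)
Definition eigenvalues (R : realType) (n : nat) (M : 'M[R]_n) : seq R[i] :=
  sval (closed_field_poly_normal (map_poly (real_complex R) (char_poly M))).

Definition cmod (R : realType) (z : R[i]) : R :=
  Num.sqrt (complex.Re z ^+ 2 + complex.Im z ^+ 2).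

(* Spectral radius: maximum modulus of the eigenvalues (0 if n = 0). *)
Definition spectral_radius (R : realType) (n : nat) (M : 'M[R]_n) : R :=
  \big[Num.max/0]_(z <- eigenvalues M) cmod z.

From HB Require Import structures.
From mathcomp Require Import all_boot all_order all_algebra complex reals.
From Stdlib Require Import ClassicalEpsilon.
From mathcomp Require Import ring lra polyrcf.
Import Order.TTheory GRing.Theory Num.Theory.
Local Open Scope ring_scope.
Set Implicit Arguments. Unset Strict Implicit. Unset Printing Implicit Defensive.

(* For a proper splitting A = U - V the projections U^+ U and U U^+ coincide
   with A^+ A and A A^+, which yields the identity U^+ V A^+ = A^+ - U^+.
   Applied to x = A^+ 1 it gives U^+ V x = x - U^+ 1 with x > 0, so the
   nonnegative matrix U^+ V strictly contracts a positive vector and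
   rho(U^+ V) < 1.  For the comparison let r be the Perron root of the
   nonnegative matrix A^+ V, i.e. the infimum of the nu admitting x > 0 with
   A^+ V x < nu x.  The identity turns a Perron vector of A^+ V into an
   eigenvector of U^+ V for r/(1+r), so r/(1+r) <= rho(U^+ V).  Conversely,
   for nu > r the M-matrix nu - A^+ V yields y > 0 with nu y = A^+ (V y + 1);
   the identity then gives (1 + nu) U^+ V y <= nu y, and B^+ >= U^+ gives
   B^+ C y <= U^+ V y, whence rho(B^+ C) <= nu/(1+nu). *)


Section MoorePenrose.
Variable R : realType.

Lemma row_free_gram_unitmx (p q : nat) (M : 'M[R]_(p, q)) :
  row_free M -> M *m M^T \in unitmx.
Proof.
move=> fM; rewrite unitmxE unitfE; apply/negP => /det0P [v vn0 vM].
have vMvM : (v *m M) *m (v *m M)^T = 0.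
  by rewrite trmx_mul mulmxA -(mulmxA v) vM mul0mx.
suff : v *m M = 0 by move/eqP; rewrite mulmx_free_eq0 // (negPf vn0).
apply/matrixP => i j; rewrite [RHS]mxE ord1.
move: (congr1 (fun X : 'M[R]_1 => X ord0 ord0) vMvM) => /=.
rewrite [X in X = _]mxE [X in _ = X]mxE => /eqP; rewrite psumr_eq0; last first.
  by move=> k _; rewrite [in X in _ * X]mxE -expr2 sqr_ge0.
move=> /allP /(_ j (mem_index_enum _)) /implyP /(_ isT).
by rewrite [in X in _ * X]mxE mulf_eq0 orbb => /eqP.
Qed.

(* Full-rank factorization A = F G gives A^+ = G^T (G G^T)^-1 (F^T F)^-1 F^T. *)
Lemma mpinv_exists (m n : nat) (A : 'M[R]_(m, n)) : exists X, is_MP_inverse A X.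
Proof.
have hF : (col_base A)^T *m col_base A \in unitmx.
  rewrite -[X in _ *m X]trmxK; apply: row_free_gram_unitmx.
  by rewrite /row_free mxrank_tr; exact: col_base_full.
have hG : row_base A *m (row_base A)^T \in unitmx.
  exact/row_free_gram_unitmx/row_base_free.
have eA : A = col_base A *m row_base A by rewrite mulmx_base.
move: (col_base A) (row_base A) hF hG eA; generalize (\rank A) => r F G hF hG ->.
set IG := invmx (G *m G^T); set IF := invmx (F^T *m F).
have kG p (Y : 'M_(r, p)) : G *m (G^T *m (IG *m Y)) = Y.
  by rewrite /IG !mulmxA (mulmxV hG) mul1mx.
have kF p (Y : 'M_(r, p)) : IF *m (F^T *m (F *m Y)) = Y.
  by rewrite /IF !mulmxA -(mulmxA _ F^T F) (mulVmx hF) mul1mx.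
have tG : IG^T = IG by rewrite /IG trmx_inv trmx_mul trmxK.
have tF : IF^T = IF by rewrite /IF trmx_inv trmx_mul trmxK.
clearbody IG IF; exists (G^T *m (IG *m (IF *m F^T))); split.
- by rewrite -!mulmxA kG kF.
- by rewrite -!mulmxA kF kG.
- by rewrite -!mulmxA kG !trmx_mul trmxK tF mulmxA.
- by rewrite -!mulmxA kF !trmx_mul trmxK tG !mulmxA.
Qed.

Lemma mpinvP (m n : nat) (A : 'M[R]_(m, n)) : is_MP_inverse A (mpinv A).
Proof. by apply: epsilon_spec; have [X hX] := mpinv_exists A; exists X. Qed.

End MoorePenrose.

Section ProperSplitting.
Variable R : realType.

Lemma col_mulmx (m n p : nat) (A : 'M[R]_(m, n)) (B : 'M[R]_(n, p)) j :
  col j (A *m B) = A *m col j B.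
Proof. by rewrite !colE mulmxA. Qed.

Lemma range_mx_cols (m n p : nat) (U : 'M[R]_(m, n)) (M : 'M[R]_(m, p)) :
  (forall j, range_mx U (col j M)) -> exists X, M = U *m X.
Proof.
move=> h; have [f hf] := fin_all_exists h.
exists (\matrix_(i, j) f j i ord0); apply/matrixP => i j.
move: (congr1 (fun X : 'cV[R]_m => X i ord0) (hf j)); rewrite /= [col _ _ _ _]mxE => ->.
by rewrite !mxE; apply: eq_bigr => k _; rewrite mxE.
Qed.

Lemma null_mx_cols (m n p : nat) (U : 'M[R]_(m, n)) (M : 'M[R]_(n, p)) :
  (forall j, null_mx U (col j M)) -> U *m M = 0.
Proof.
move=> h; apply/matrixP => i j.
have := congr1 (fun X : 'cV[R]_m => X i ord0) (h j); rewrite /= [RHS]mxE => e.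
by rewrite [RHS]mxE -e !mxE; apply: eq_bigr => k _; rewrite mxE.
Qed.

Variables (m n : nat) (A U V : 'M[R]_(m, n)).
Hypothesis spU : proper_splitting A U V.

Lemma proper_mpinv_mulmx : mpinv U *m U = mpinv A *m A.
Proof.
case: spU => _ _ hN; have [u1 _ _ u4] := mpinvP U; have [a1 _ _ a4] := mpinvP A.
have absorb (P Q : 'M[R]_n) : P *m (1%:M - Q) = 0 -> P = P *m Q.
  by move=> hP; apply/eqP; rewrite -subr_eq0 -{1}(mulmx1 P) -mulmxBr hP.
have kerA : A *m (1%:M - mpinv U *m U) = 0.
  apply: null_mx_cols => j; apply/hN; rewrite /null_mx -col_mulmx.
  by rewrite mulmxBr mulmx1 mulmxA u1 subrr col0.
have kerU : U *m (1%:M - mpinv A *m A) = 0.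
  apply: null_mx_cols => j; apply/(hN _).2; rewrite /null_mx -col_mulmx.
  by rewrite mulmxBr mulmx1 mulmxA a1 subrr col0.
have eUA : mpinv U *m U = mpinv U *m U *m (mpinv A *m A).
  by apply: absorb; rewrite -mulmxA kerU mulmx0.
have eAU : mpinv A *m A = mpinv A *m A *m (mpinv U *m U).
  by apply: absorb; rewrite -mulmxA kerA mulmx0.
(* both sides are symmetric, so each absorbing the other forces equality *)
by rewrite -u4 eUA trmx_mul u4 a4 -eAU.
Qed.

Lemma proper_mulmx_mpinv : U *m mpinv U = A *m mpinv A.
Proof.
case: spU => _ hR _; have [u1 _ u3 _] := mpinvP U; have [a1 _ a3 _] := mpinvP A.
have [X eAX] : exists X, A *m mpinv A = U *m X.
  by apply: range_mx_cols => j; apply/(hR _).2; rewrite col_mulmx; eexists.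
have [Y eUY] : exists Y, U *m mpinv U = A *m Y.
  by apply: range_mx_cols => j; apply/(hR _).1; rewrite col_mulmx; eexists.
have eUA : U *m mpinv U *m (A *m mpinv A) = A *m mpinv A by rewrite eAX mulmxA u1.
have eAU : A *m mpinv A *m (U *m mpinv U) = U *m mpinv U by rewrite eUY mulmxA a1.
by rewrite -u3 -eAU trmx_mul u3 a3 eUA.
Qed.

Lemma proper_iteration_mpinv : mpinv U *m V *m mpinv A = mpinv A - mpinv U.
Proof.
have eV : V = U - A by case: spU => -> _ _; rewrite opprB addrC subrK.
have [_ u2 _ _] := mpinvP U; have [_ a2 _ _] := mpinvP A.
rewrite eV mulmxBr mulmxBl proper_mpinv_mulmx a2 -mulmxA -proper_mulmx_mpinv.
by rewrite mulmxA u2.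
Qed.

Lemma proper_iteration_resolvent (nu : R) (y : 'cV[R]_n) (b : 'cV[R]_m) :
  nu *: y = mpinv A *m (V *m y + b) ->
  (1 + nu) *: (mpinv U *m V *m y) = nu *: y - mpinv U *m b.
Proof.
move=> hy; rewrite scalerDl scale1r.
have -> : nu *: (mpinv U *m V *m y) = mpinv U *m V *m (nu *: y) by rewrite scalemxAr.
rewrite hy mulmxA proper_iteration_mpinv mulmxBl -hy mulmxDr mulmxA.
by rewrite opprD addrCA addNKr.
Qed.

End ProperSplitting.

Import ComplexField.Normc.

Section SpectralRadius.
Variable R : realType.
Local Notation C := (R[i]).

Lemma normc_sum (I : Type) (r : seq I) (F : I -> C) :
  normc (\sum_(i <- r) F i) <= \sum_(i <- r) normc (F i).
Proof.
elim/big_rec2: _ => [|i y1 y2 _ h]; first by rewrite normc0.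
by apply: le_trans (le_normcD _ _) _; rewrite lerD2l.
Qed.

Lemma normc_real (r : R) : normc (real_complex R r) = `|r|.
Proof. by rewrite /normc /= expr0n addr0 sqrtr_sqr. Qed.

Lemma normc_ge0 (z : C) : 0 <= normc z.
Proof. by case: z => a b; rewrite /normc sqrtr_ge0. Qed.

Lemma cmod_normc (z : C) : cmod z = normc z.
Proof. by case: z. Qed.

Lemma mem_eigenvalues (n : nat) (M : 'M[R]_n) (z : C) :
  (z \in eigenvalues M) = root (map_poly (real_complex R) (char_poly M)) z.
Proof.
rewrite /eigenvalues; case: closed_field_poly_normal => s /= ->.
rewrite rootZ ?root_prod_XsubC // lead_coef_eq0 map_poly_eq0 monic_neq0 //.
exact: char_poly_monic.
Qed.

Lemma eigenvalues_eigenvector (n : nat) (M : 'M[R]_n) (z : C) :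
  z \in eigenvalues M ->
  exists2 v : 'rV[C]_n, v *m map_mx (real_complex R) M = z *: v & v != 0.
Proof.
by rewrite mem_eigenvalues map_char_poly -eigenvalue_root_char => /eigenvalueP.
Qed.

Lemma spectral_radius_le (n : nat) (M : 'M[R]_n) (a : R) : 0 <= a ->
  (forall z, z \in eigenvalues M -> cmod z <= a) -> spectral_radius M <= a.
Proof. by move=> a0 h; rewrite /spectral_radius big_seq; apply: bigmax_le. Qed.

Lemma spectral_radius_lt (n : nat) (M : 'M[R]_n) (a : R) : 0 < a ->
  (forall z, z \in eigenvalues M -> cmod z < a) -> spectral_radius M < a.
Proof. by move=> a0 h; rewrite /spectral_radius big_seq; apply: bigmax_lt. Qed.

Lemma eigenvector_le_spectral_radius (n : nat) (M : 'M[R]_n) (lam : R) (y : 'cV[R]_n) :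
  y != 0 -> M *m y = lam *: y -> `|lam| <= spectral_radius M.
Proof.
move=> yn0 hy.
have : \det ((lam%:M - M)^T) == 0.
  apply/det0P; exists y^T; first by rewrite trmx_eq0.
  by rewrite -trmx_mul mulmxBl mul_scalar_mx hy subrr trmx0.
rewrite det_tr => /det0P [v vn0 hv].
have : eigenvalue M lam.
  apply/eigenvalueP; exists v => //.
  by apply/eqP; rewrite eq_sym -subr_eq0 -mul_mx_scalar -mulmxBr hv.
rewrite eigenvalue_root_char => /(rmorph_root (real_complex R)).
rewrite -mem_eigenvalues => lam_eig.
apply: le_trans (le_bigmax_seq _ _ _ _ lam_eig isT).
by rewrite cmod_normc normc_real.
Qed.

Lemma eigenvector_normc_subinv (n : nat) (M : 'M[R]_n) (z : C) (v : 'rV[C]_n) :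
  (forall i j, 0 <= M i j) -> v *m map_mx (real_complex R) M = z *: v ->
  forall j, normc z * normc (v ord0 j) <= \sum_i normc (v ord0 i) * M i j.
Proof.
move=> M0 hv j; have := congr1 (fun X : 'rV[C]_n => X ord0 j) hv.
rewrite /= [LHS]mxE [RHS]mxE => e.
rewrite -normcM -e; apply: (le_trans (normc_sum _ _)).
by apply: ler_sum => i _; rewrite mxE normcM normc_real ger0_norm.
Qed.

Lemma psumr_mul_gt0 (n : nat) (a x : 'I_n -> R) j :
  (forall i, 0 <= a i) -> (forall i, 0 <= x i) -> 0 < a j -> 0 < x j ->
  0 < \sum_i a i * x i.
Proof.
move=> a0 x0 aj xj; rewrite (bigD1 j) //=.
apply: ltr_wpDr; first by apply: sumr_ge0 => i _; rewrite mulr_ge0.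
by rewrite mulr_gt0.
Qed.

Lemma subinv_pairing (n : nat) (M : 'M[R]_n) (a : 'I_n -> R) (x d : 'cV[R]_n)
    (c al : R) :
  (forall j, 0 <= a j) -> (forall i, 0 <= x i ord0) ->
  (forall j, c * a j <= \sum_i a i * M i j) ->
  (forall i, (M *m x) i ord0 <= al * x i ord0 - d i ord0) ->
  c * \sum_i a i * x i ord0 <= al * \sum_i a i * x i ord0 - \sum_i a i * d i ord0.
Proof.
move=> a0 x0 ha hM; rewrite mulr_sumr.
apply: (@le_trans _ _ (\sum_i (\sum_k a k * M k i) * x i ord0)).
  by apply: ler_sum => i _; rewrite mulrA ler_wpM2r.
under eq_bigr do rewrite mulr_suml.
rewrite exchange_big /= mulr_sumr -sumrB; apply: ler_sum => k _.
under eq_bigr do rewrite -mulrA.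
rewrite -mulr_sumr mulrCA -mulrBr; apply: ler_wpM2l => //.
by have := hM k; rewrite mxE.
Qed.

Lemma eigenvalue_subinv_bound (n : nat) (M : 'M[R]_n) (x d : 'cV[R]_n) (al : R) :
  (forall i j, 0 <= M i j) -> (forall i, 0 < x i ord0) ->
  (forall i, 0 <= d i ord0) ->
  (forall i, (M *m x) i ord0 <= al * x i ord0 - d i ord0) ->
  forall z, z \in eigenvalues M ->
  cmod z <= al /\ ((forall i, 0 < d i ord0) -> cmod z < al).
Proof.
move=> M0 xpos d0 hM z /eigenvalues_eigenvector [v hv vn0].
pose a j := normc (v ord0 j).
have a0 j : 0 <= a j by exact: normc_ge0.
have [j vj] : exists j, v ord0 j != 0.
  apply/existsP; apply: contraR vn0 => /existsPn h; apply/eqP/matrixP => i k.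
  by rewrite ord1 mxE; apply/eqP; move: (h k); rewrite negbK.
have aj : 0 < a j by rewrite lt_def a0 andbT; apply/eqP => /eq0_normc; exact/eqP.
have x0 i : 0 <= x i ord0 by exact: ltW.
have S0 : 0 < \sum_i a i * x i ord0 by exact: psumr_mul_gt0 a0 x0 aj (xpos j).
have D0 : 0 <= \sum_i a i * d i ord0 by apply: sumr_ge0 => i _; rewrite mulr_ge0.
have := subinv_pairing a0 x0 (eigenvector_normc_subinv M0 hv) hM.
rewrite cmod_normc; split=> [|dpos]; first by nra.
have : 0 < \sum_i a i * d i ord0 by exact: psumr_mul_gt0 a0 d0 aj (dpos j).
by nra.
Qed.

Lemma spectral_radius_le_subinv (n : nat) (M : 'M[R]_n) (x : 'cV[R]_n) (al : R) :
  (forall i j, 0 <= M i j) -> (forall i, 0 < x i ord0) -> 0 <= al ->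
  (forall i, (M *m x) i ord0 <= al * x i ord0) -> spectral_radius M <= al.
Proof.
move=> M0 xpos al0 hM; apply: spectral_radius_le => // z hz.
have d0 i : 0 <= (0 : 'cV[R]_n) i ord0 by rewrite mxE.
have hM0 i : (M *m x) i ord0 <= al * x i ord0 - (0 : 'cV[R]_n) i ord0.
  by rewrite [(0 : 'cV[R]_n) _ _]mxE subr0.
by case: (eigenvalue_subinv_bound M0 xpos d0 hM0 hz).
Qed.

Lemma spectral_radius_lt_subinv (n : nat) (M : 'M[R]_n) (x d : 'cV[R]_n) (al : R) :
  (forall i j, 0 <= M i j) -> (forall i, 0 < x i ord0) -> 0 < al ->
  (forall i, 0 < d i ord0) ->
  (forall i, (M *m x) i ord0 <= al * x i ord0 - d i ord0) -> spectral_radius M < al.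
Proof.
move=> M0 xpos al0 dpos hM; apply: spectral_radius_lt => // z hz.
have d0 i : 0 <= d i ord0 by exact: ltW.
by case: (eigenvalue_subinv_bound M0 xpos d0 hM hz) => _; apply.
Qed.

End SpectralRadius.

Section Zmatrix.
Variable R : realType.

Definition Zmatrix (n : nat) (Z : 'M[R]_n) := forall i j, i != j -> Z i j <= 0.

Lemma mulmx_ge0 (m n p : nat) (M : 'M[R]_(m, n)) (X : 'M[R]_(n, p)) :
  (forall i j, 0 <= M i j) -> (forall i j, 0 <= X i j) ->
  forall i k, 0 <= (M *m X) i k.
Proof. by move=> M0 X0 i k; rewrite mxE; apply: sumr_ge0 => j _; rewrite mulr_ge0. Qed.

Lemma mulmx_col_ge0 (m n : nat) (M : 'M[R]_(m, n)) (y : 'cV[R]_n) :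
  (forall i j, 0 <= M i j) -> (forall i, 0 <= y i ord0) ->
  forall i, 0 <= (M *m y) i ord0.
Proof. by move=> M0 y0 i; apply: mulmx_ge0 => // k l; rewrite ord1. Qed.

Lemma mulmx_ones (m n : nat) (M : 'M[R]_(m, n)) i :
  (M *m (const_mx 1 : 'cV[R]_n)) i ord0 = \sum_j M i j.
Proof. by rewrite mxE; apply: eq_bigr => j _; rewrite mxE mulr1. Qed.

Lemma scalar_sub_mulmxE (n : nat) (N : 'M[R]_n) (s : R) (x : 'cV[R]_n) i :
  ((s%:M - N) *m x) i ord0 = s * x i ord0 - (N *m x) i ord0.
Proof. by rewrite mulmxBl mul_scalar_mx !mxE. Qed.

Lemma Zmatrix_scalar_sub (n : nat) (N : 'M[R]_n) (s : R) :
  (forall i j, 0 <= N i j) -> Zmatrix (s%:M - N).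
Proof. by move=> N0 i j ij; rewrite !mxE (negPf ij) mulr0n sub0r oppr_le0. Qed.

(* Minimum principle: at an index where y/x is most negative, Z (y + t x)
   would be both positive and nonpositive. *)
Lemma Zmatrix_monotone (n : nat) (Z : 'M[R]_n) (x y : 'cV[R]_n) :
  Zmatrix Z -> (forall i, 0 < x i ord0) -> (forall i, 0 < (Z *m x) i ord0) ->
  (forall i, 0 <= (Z *m y) i ord0) -> forall i, 0 <= y i ord0.
Proof.
move=> hZ hx hZx hZy i; rewrite leNgt; apply/negP => yi.
pose F k := - y k ord0 / x k ord0.
have [k _ hk] := @arg_maxP _ _ _ i xpredT F isT.
set t := F k.
have t0 : 0 < t by apply: lt_le_trans (hk i isT); rewrite /F divr_gt0 // oppr_gt0.
pose u := y + t *: x.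
have u0 j : 0 <= u j ord0.
  rewrite /u !mxE addrC -[y j ord0]opprK subr_ge0.
  by rewrite -ler_pdivrMr //; exact: (hk j isT).
have uk : u k ord0 = 0 by rewrite /u !mxE /t /F divfK ?subrr // gt_eqF.
have Zu_gt0 : 0 < (Z *m u) k ord0.
  rewrite /u mulmxDr -scalemxAr mxE [X in _ + X]mxE.
  by apply: ltr_wpDl; [exact: hZy | rewrite mulr_gt0].
have Zu_le0 : (Z *m u) k ord0 <= 0.
  rewrite mxE; apply: sumr_le0 => j _.
  have [-> | njk] := eqVneq j k; first by rewrite uk mulr0.
  by apply: mulr_le0_ge0 => //; apply: hZ; rewrite eq_sym.
by move: (lt_le_trans Zu_gt0 Zu_le0); rewrite ltxx.
Qed.

Lemma Zmatrix_unitmx (n : nat) (Z : 'M[R]_n) (x : 'cV[R]_n) :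
  Zmatrix Z -> (forall i, 0 < x i ord0) -> (forall i, 0 < (Z *m x) i ord0) ->
  Z \in unitmx.
Proof.
move=> hZ hx hZx; rewrite unitmxE unitfE -det_tr.
apply/negP => /det0P [v vn0 hv]; apply/negP: vn0; rewrite negbK.
have Zv : Z *m v^T = 0 by rewrite -[Z]trmxK -trmx_mul hv trmx0.
apply/eqP/matrixP => a b; rewrite mxE ord1.
have /(_ b) : forall i, 0 <= v^T i ord0.
  by apply: (Zmatrix_monotone hZ hx hZx) => i; rewrite Zv mxE.
have /(_ b) : forall i, 0 <= (- v^T) i ord0.
  by apply: (Zmatrix_monotone hZ hx hZx) => i; rewrite mulmxN Zv oppr0 mxE.
by rewrite !mxE oppr_ge0 => vle vge; apply/eqP; rewrite eq_le vle vge.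
Qed.

Lemma subinv_resolvent_gt0 (n : nat) (N : 'M[R]_n) (x b : 'cV[R]_n) (nu : R) :
  (forall i j, 0 <= N i j) -> (forall i, 0 < x i ord0) ->
  (forall i, (N *m x) i ord0 < nu * x i ord0) -> (forall i, 0 < b i ord0) ->
  exists2 y : 'cV[R]_n, (forall i, 0 < y i ord0) & nu *: y - N *m y = b.
Proof.
move=> N0 xpos hx bpos.
have ZN := Zmatrix_scalar_sub nu N0.
have Zx i : 0 < ((nu%:M - N) *m x) i ord0 by rewrite scalar_sub_mulmxE subr_gt0.
set y := invmx (nu%:M - N) *m b.
have Zy : (nu%:M - N) *m y = b by rewrite mulKVmx // (Zmatrix_unitmx ZN xpos Zx).
have y0 : forall i, 0 <= y i ord0.
  by apply: (Zmatrix_monotone ZN xpos Zx) => i; rewrite Zy ltW.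
exists y => [i|]; last by rewrite -Zy mulmxBl mul_scalar_mx.
have Ny0 := mulmx_col_ge0 N0 y0 i.
have := bpos i; rewrite -Zy scalar_sub_mulmxE => hb.
by rewrite lt_def y0 andbT; apply/eqP => yi0; move: hb Ny0; rewrite yi0 mulr0; lra.
Qed.

End Zmatrix.

Section CharPoly.
Variable R : realType.

Lemma horner_ge0_right (q : {poly R}) (a : R) :
  (forall s, a < s -> 0 <= q.[s]) -> 0 <= q.[a].
Proof.
move=> h; rewrite leNgt; apply/negP => qa.
have qa' : 0 < - q.[a] by rewrite oppr_gt0.
have [d d0 hd] := poly_cont a q qa'.
have hs : `|(a + d / 2) - a| < d.
  rewrite addrC addKr ger0_norm ?divr_ge0 ?ltW //.
  by rewrite ltr_pdivrMr // ltr_pMr // ltr1n.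
have := hd _ hs; have := h (a + d / 2).
rewrite ltrDl divr_gt0 // => /(_ isT) hq.
by rewrite ltr_norml => /andP [_]; rewrite ltrBlDr addNr ltNge hq.
Qed.

Lemma horner_char_poly_mx (n : nat) (N : 'M[R]_n) (s : R) :
  map_mx (horner_eval s) (char_poly_mx N) = s%:M - N.
Proof.
apply/matrixP => i j; rewrite /char_poly_mx !mxE horner_evalE.
by rewrite hornerD hornerN hornerMn hornerX hornerC.
Qed.

Lemma horner_char_poly (n : nat) (N : 'M[R]_n) (s : R) :
  (char_poly N).[s] = \det (s%:M - N).
Proof. by rewrite -horner_evalE /char_poly -det_map_mx horner_char_poly_mx. Qed.

Lemma horner_adj_char_poly_mx (n : nat) (N : 'M[R]_n) (s : R) i :
  ((\adj (char_poly_mx N) *m (const_mx 1 : 'cV[{poly R}]_n)) i ord0).[s] =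
  (\adj (s%:M - N) *m (const_mx 1 : 'cV[R]_n)) i ord0.
Proof.
have -> : (const_mx 1 : 'cV[R]_n) = map_mx (horner_eval s) (const_mx 1).
  by rewrite map_const_mx rmorph1.
by rewrite -horner_evalE -horner_char_poly_mx -map_mx_adj -map_mxM [RHS]mxE.
Qed.

Lemma invr_mul_ge0E (a d : R) : d != 0 -> (0 <= d^-1 * a) = (0 <= a * d).
Proof.
move=> d0; apply/idP/idP => h.
- have -> : a * d = (d^-1 * a) * d ^+ 2 by field.
  by rewrite mulr_ge0 ?sqr_ge0.
- have -> : d^-1 * a = (a * d) * d^-1 ^+ 2 by field.
  by rewrite mulr_ge0 ?sqr_ge0.
Qed.

End CharPoly.

Section CollatzWielandt.
Variables (R : realType) (n : nat) (N : 'M[R]_n).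
Hypothesis N0 : forall i j, 0 <= N i j.

Local Notation one := (const_mx 1 : 'cV[R]_n).

Definition subinv_set : classical_sets.set R := fun s =>
  exists2 x : 'cV[R]_n, (forall i, 0 < x i ord0) &
    forall i, (N *m x) i ord0 < s * x i ord0.

Lemma subinv_set_nonempty : classical_sets.nonempty subinv_set.
Proof.
exists (1 + \sum_i \sum_j N i j), one => i; first by rewrite mxE ltr01.
rewrite mulmx_ones mxE mulr1 -[X in X < _]add0r ltr_leD //.
by rewrite [X in _ <= X](bigD1 i) //= lerDl; apply: sumr_ge0 => k _; apply: sumr_ge0.
Qed.

Lemma subinv_set_lbound (i0 : 'I_n) : classical_sets.lbound subinv_set 0.
Proof.
move=> s [x xpos hx]; have Nx0 := mulmx_col_ge0 N0 (fun i => ltW (xpos i)) i0.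
have : 0 < s * x i0 ord0 by apply: le_lt_trans Nx0 (hx i0).
by rewrite pmulr_lgt0 // => /ltW.
Qed.

Lemma subinv_set_gt_inf s : inf subinv_set < s -> subinv_set s.
Proof.
move=> /(inf_lt subinv_set_nonempty) [t [x xpos hx] ts]; exists x => // i.
by apply: lt_le_trans (hx i) _; rewrite ler_pM2r // ltW.
Qed.

Lemma subinv_set_unitmx s : subinv_set s -> s%:M - N \in unitmx.
Proof.
move=> [x xpos hx]; apply: (Zmatrix_unitmx (Zmatrix_scalar_sub s N0) xpos).
by move=> i; rewrite scalar_sub_mulmxE subr_gt0.
Qed.

Lemma subinv_set_resolvent_ge0 s : subinv_set s ->
  forall i, 0 <= (invmx (s%:M - N) *m one) i ord0.
Proof.
move=> Ss; have su := subinv_set_unitmx Ss; case: Ss => x xpos hx.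
apply: (Zmatrix_monotone (Zmatrix_scalar_sub s N0) xpos).
  by move=> i; rewrite scalar_sub_mulmxE subr_gt0.
by move=> i; rewrite mulKVmx // mxE ler01.
Qed.

(* The entries of adj(s - N) 1 * det(s - N) are polynomials in s, nonnegative
   to the right of inf subinv_set, hence also at it by continuity. *)
Lemma resolvent_ge0_inf : (inf subinv_set)%:M - N \in unitmx ->
  forall i, 0 <= (invmx ((inf subinv_set)%:M - N) *m one) i ord0.
Proof.
move=> ru i.
pose q := (\adj (char_poly_mx N) *m (const_mx 1 : 'cV[{poly R}]_n)) i ord0 * char_poly N.
have qE s : q.[s] = (\adj (s%:M - N) *m one) i ord0 * \det (s%:M - N).
  by rewrite hornerM horner_adj_char_poly_mx horner_char_poly.
have invE s : s%:M - N \in unitmx -> (invmx (s%:M - N) *m one) i ord0 =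
    (\det (s%:M - N))^-1 * (\adj (s%:M - N) *m one) i ord0.
  by move=> su; rewrite /invmx su -scalemxAl mxE.
have det_neq0 s : s%:M - N \in unitmx -> \det (s%:M - N) != 0.
  by rewrite unitmxE unitfE.
rewrite invE // invr_mul_ge0E ?det_neq0 // -qE.
apply: horner_ge0_right => s /subinv_set_gt_inf Ss.
have su := subinv_set_unitmx Ss.
by rewrite qE -invr_mul_ge0E ?det_neq0 // -invE //; exact: subinv_set_resolvent_ge0.
Qed.

Lemma subinv_set_resolvent (r : R) (y : 'cV[R]_n) :
  (forall i, 0 <= y i ord0) -> (r%:M - N) *m y = one ->
  subinv_set (r - (1 + \sum_i y i ord0)^-1).
Proof.
move=> y0 hy; set K := 1 + \sum_i y i ord0.
have hyi i : r * y i ord0 - (N *m y) i ord0 = 1.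
  by rewrite -scalar_sub_mulmxE hy mxE.
have ypos i : 0 < y i ord0.
  rewrite lt_def y0 andbT; apply/eqP => yi0.
  by have := hyi i; have := mulmx_col_ge0 N0 y0 i; rewrite yi0 mulr0; lra.
have yK i : y i ord0 < K.
  rewrite /K (bigD1 i) //=.
  have : 0 <= \sum_(j < n | j != i) y j ord0 by exact: sumr_ge0.
  lra.
exists y => // i.
have K0 : 0 < K by apply: lt_trans (yK i).
have : y i ord0 * K^-1 < 1 by rewrite ltr_pdivrMr // mul1r.
by have := hyi i; rewrite mulrBl (mulrC K^-1); lra.
Qed.

Lemma det_inf_subinv_set (i0 : 'I_n) : \det ((inf subinv_set)%:M - N) = 0.
Proof.
set r := inf subinv_set; apply/eqP; apply: contraT => hd.
have ru : r%:M - N \in unitmx by rewrite unitmxE unitfE.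
have y0 := resolvent_ge0_inf ru.
have hy : (r%:M - N) *m (invmx (r%:M - N) *m one) = one by rewrite mulKVmx.
have K0 : 0 < (1 + \sum_i (invmx (r%:M - N) *m one) i ord0)^-1.
  by rewrite invr_gt0 ltr_pwDl ?ltr01 ?sumr_ge0.
have lb : classical_sets.has_lbound subinv_set by exists 0; exact: subinv_set_lbound.
by have := ge_inf lb (subinv_set_resolvent y0 hy); rewrite -/r; lra.
Qed.

Lemma perron_collatz_wielandt (i0 : 'I_n) :
  exists r : R, [/\ 0 <= r, exists2 y : 'cV[R]_n, y != 0 & N *m y = r *: y &
    forall nu, r < nu -> subinv_set nu].
Proof.
exists (inf subinv_set); split; last exact: subinv_set_gt_inf.
  exact: lb_le_inf subinv_set_nonempty (subinv_set_lbound i0).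
have := det_inf_subinv_set i0; rewrite -det_tr => /eqP/det0P [v vn0 hv].
exists v^T; first by rewrite trmx_eq0.
apply/eqP; rewrite eq_sym -subr_eq0 -mul_scalar_mx -mulmxBl.
by rewrite -[_ - _]trmxK -trmx_mul hv trmx0.
Qed.

End CollatzWielandt.

Lemma ratio1D_le_add (R : realFieldType) (r eps : R) : 0 <= r -> 0 <= eps ->
  (r + eps) / (1 + (r + eps)) <= r / (1 + r) + eps.
Proof.
move=> r0 e0.
have h1 : 0 < 1 + r by lra.
have h2 : 0 < 1 + (r + eps) by lra.
have -> : (r + eps) / (1 + (r + eps)) =
   r / (1 + r) + eps / ((1 + r) * (1 + (r + eps))).
  by field; rewrite !gt_eqF.
rewrite lerD2l ler_pdivrMr ?mulr_gt0 //.
have : 1 <= (1 + r) * (1 + (r + eps)) by nra.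
nra.
Qed.

Section Comparison.
Variables (R : realType) (m n : nat) (A B C U V : 'M[R]_(m, n)).
Hypotheses (spB : proper_splitting A B C) (spU : proper_splitting A U V).
Hypotheses (A0 : forall i j, 0 <= mpinv A i j) (V0 : forall i j, 0 <= V i j).
Hypothesis UV0 : forall i j, 0 <= (mpinv U *m V) i j.
Hypothesis BC0 : forall i j, 0 <= (mpinv B *m C) i j.
Hypothesis BU0 : forall i j, 0 <= (mpinv B - mpinv U) i j.

Local Notation e := (const_mx 1 : 'cV[R]_m).

Hypothesis Ue_gt0 : forall i, 0 < (mpinv U *m e) i ord0.

Lemma ones_ge0 : forall i, 0 <= e i ord0.
Proof. by move=> i; rewrite mxE. Qed.

Lemma mpinv_ones_gt0 : forall i, 0 < (mpinv A *m e) i ord0.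
Proof.
move=> i; have := mulmx_col_ge0 UV0 (mulmx_col_ge0 A0 ones_ge0) i.
rewrite mulmxA proper_iteration_mpinv // mulmxBl.
by have := Ue_gt0 i; move: (mpinv A *m e) (mpinv U *m e) => a u; rewrite !mxE; lra.
Qed.

Lemma spectral_radius_proper_lt1 : spectral_radius (mpinv U *m V) < 1.
Proof.
apply: (spectral_radius_lt_subinv UV0 mpinv_ones_gt0 ltr01 Ue_gt0) => i.
rewrite mul1r mulmxA proper_iteration_mpinv // mulmxBl.
by move: (mpinv A *m e) (mpinv U *m e) => a u; rewrite !mxE.
Qed.

Lemma perron_root_ratio_le (r : R) (y : 'cV[R]_n) :
  0 <= r -> y != 0 -> mpinv A *m V *m y = r *: y ->
  r / (1 + r) <= spectral_radius (mpinv U *m V).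
Proof.
move=> r0 yn0 hy.
have ry : r *: y = mpinv A *m (V *m y + 0) by rewrite addr0 mulmxA hy.
have := proper_iteration_resolvent spU ry; rewrite mulmx0 subr0 => T2y.
have r1 : 0 < 1 + r by lra.
have : mpinv U *m V *m y = (r / (1 + r)) *: y.
  by rewrite -[LHS](scalerK (lt0r_neq0 r1)) T2y scalerA mulrC.
move/(eigenvector_le_spectral_radius yn0).
by rewrite ger0_norm // divr_ge0 // ltW.
Qed.

Lemma iteration_le_on_mpinv_range (w : 'cV[R]_m) : (forall i, 0 <= w i ord0) ->
  forall i, (mpinv B *m C *m (mpinv A *m w)) i ord0 <=
            (mpinv U *m V *m (mpinv A *m w)) i ord0.
Proof.
move=> w0 i; have := mulmx_col_ge0 BU0 w0 i.
rewrite !mulmxA !proper_iteration_mpinv // !mulmxBl.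
by move: (mpinv A *m w) (mpinv B *m w) (mpinv U *m w) => a b u; rewrite !mxE; lra.
Qed.

Lemma spectral_radius_weak_le_ratio (nu : R) :
  0 < nu -> subinv_set (mpinv A *m V) nu ->
  spectral_radius (mpinv B *m C) <= nu / (1 + nu).
Proof.
move=> nu0 [x xpos hx].
have [y ypos hy] := subinv_resolvent_gt0 (mulmx_ge0 A0 V0) xpos hx mpinv_ones_gt0.
have nuy : nu *: y = mpinv A *m (V *m y + e) by rewrite mulmxDr mulmxA -hy addrC subrK.
have w0 i : 0 <= (V *m y + e) i ord0.
  by rewrite mxE addr_ge0 ?ones_ge0 // (mulmx_col_ge0 V0 (fun j => ltW (ypos j))).
have T1T2 := iteration_le_on_mpinv_range w0; rewrite -nuy in T1T2.
have T2y := proper_iteration_resolvent spU nuy.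
apply: (spectral_radius_le_subinv BC0 ypos) => [|i].
  by rewrite divr_ge0 // ltW // addr_gt0.
have := Ue_gt0 i; have := T1T2 i.
have := congr1 (fun X : 'cV[R]_n => X i ord0) T2y; rewrite /= -!scalemxAr.
move: (mpinv B *m C *m y) (mpinv U *m V *m y) (mpinv U *m e) => t1 t2 p.
rewrite !mxE => h2 h1 hp.
have t12 : t1 i ord0 <= t2 i ord0 by rewrite -(ler_pM2l nu0).
rewrite mulrAC ler_pdivlMr ?addr_gt0 //; nra.
Qed.

End Comparison.

Theorem theorem3p10 (R : realType) (m n : nat) (A B C U V : 'M[R]_(m, n)) :
  semi_monotone A ->
  proper_weak_regular_splitting A B C ->
  proper_regular_splitting A U V ->
  mx_ge (mpinv B) (mpinv U) ->
  (forall i : 'I_n, 0 < \sum_(j < m) mpinv U i j) ->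
  spectral_radius (mpinv B *m C) <= spectral_radius (mpinv U *m V) /\
  spectral_radius (mpinv U *m V) < 1.
Proof.
move=> [A0 [i0 _]] [spB _ [BC0 _]] [spU [U0 _] [V0 _]] [BU0 _] rowU.
have UV0 := mulmx_ge0 U0 V0.
have Ue_gt0 i : 0 < (mpinv U *m (const_mx 1 : 'cV[R]_m)) i ord0 by rewrite mulmx_ones.
split; last exact: spectral_radius_proper_lt1 spU A0 UV0 Ue_gt0.
have [r [r0 [y yn0 hy] hsub]] := perron_collatz_wielandt (mulmx_ge0 A0 V0) i0.
apply: le_trans (perron_root_ratio_le spU r0 yn0 hy).
apply/ler_addgt0Pr => eps eps0.
apply: le_trans (ratio1D_le_add r0 (ltW eps0)).
apply: (spectral_radius_weak_le_ratio spB spU A0 V0 UV0 BC0 BU0 Ue_gt0).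
  by lra.
by apply: hsub; rewrite ltrDl.
Qed.
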